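(* Let $\widetilde W\subset S^{n+1}$ be a spherical convex body. Then $\widetilde W=\widetilde W^{\circ}$ if and only if $\widetilde W$ is of constant width $\pi/2$.
   Context: For $P\in S^{n+1}$, $H(P)=\{Q\in S^{n+1}:P\cdot Q\ge0\}$. A subset of $S^{n+1}$ is hemispherical if it is disjoint from some $H(P)$. The arc $PQ$ is $\{((1-t)P+tQ)/\|(1-t)P+tQ\|:t\in[0,1]\}$, of length $|PQ|=\arccos(P\cdot Q)$. A spherical convex body is a closed hemispherical set with nonempty interior containing the arc $PQ$ for all its points $P,Q$. The spherical polar set is $\widetilde W^\circ=\bigcap_{P\in\widetilde W}H(P)$. $H(P)$ supports $\widetilde W$ if $\widetilde W\subset H(P)$ and $\partial\widetilde W\cap\partial H(P)\ne\emptyset$. The lune $H(P)\cap H(Q)$ ($P\ne\pm Q$) has thickness $\Delta(H(P)\cap H(Q))=\pi-|PQ|$. For $H(P)$ supporting $\widetilde W$, $\mathrm{width}_{H(P)}\widetilde W$ is the minimum of $\Delta(H(P)\cap H(Q))$ over hemispheres $H(Q)$ supporting $\widetilde W$ with $\widetilde W\subset H(P)\cap H(Q)$. $\widetilde W$ is of constant width $\rho$ ($0<\rho<\pi$) if $\mathrm{width}_{H(P)}\widetilde W=\rho$ for every supporting hemisphere $H(P)$. *)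

From Stdlib Require Import Reals.
Open Scope R_scope.

(* Vectors of R^{n+2} are represented by functions nat -> R; only the
   coordinates 0..n+1 are relevant, points of the sphere are required to
   vanish beyond index n+1. *)
Definition vec := nat -> R.

Fixpoint sumR (m : nat) (f : nat -> R) : R :=
  match m with O => 0 | S k => sumR k f + f k end.

Definition dot (n : nat) (x y : vec) : R := sumR (S (S n)) (fun i => x i * y i).
Definition vnorm (n : nat) (x : vec) : R := sqrt (dot n x x).
Definition vadd (x y : vec) : vec := fun i => x i + y i.
Definition vscale (a : R) (x : vec) : vec := fun i => a * x i.
Definition vopp (x : vec) : vec := fun i => - x i.
Definition vdist (n : nat) (x y : vec) : R := vnorm n (vadd x (vopp y)).

Definition sphere (n : nat) (P : vec) : Prop :=
  (forall i, (S (S n) <= i)%nat -> P i = 0) /\ dot n P P = 1.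

Definition hemi (n : nat) (P : vec) (Q : vec) : Prop :=
  sphere n Q /\ dot n P Q >= 0.

Definition hemispherical (n : nat) (W : vec -> Prop) : Prop :=
  exists P, sphere n P /\ forall Q, W Q -> ~ hemi n P Q.

Definition arc_point (n : nat) (P Q : vec) (t : R) : vec :=
  let v := vadd (vscale (1 - t) P) (vscale t Q) in vscale (/ vnorm n v) v.

Definition arc (n : nat) (P Q : vec) (X : vec) : Prop :=
  exists t, 0 <= t <= 1 /\ X = arc_point n P Q t.

Definition sdist (n : nat) (P Q : vec) : R := acos (dot n P Q).

Definition sph_closed (n : nat) (A : vec -> Prop) : Prop :=
  forall Q, sphere n Q -> ~ A Q ->
    exists eps, eps > 0 /\ forall X, sphere n X -> vdist n X Q < eps -> ~ A X.

Definition sph_interior (n : nat) (A : vec -> Prop) (Q : vec) : Prop :=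
  sphere n Q /\ exists eps, eps > 0 /\
    forall X, sphere n X -> vdist n X Q < eps -> A X.

Definition sph_boundary (n : nat) (A : vec -> Prop) (Q : vec) : Prop :=
  sphere n Q /\ forall eps, eps > 0 ->
    (exists X, sphere n X /\ vdist n X Q < eps /\ A X) /\
    (exists X, sphere n X /\ vdist n X Q < eps /\ ~ A X).

Definition convex_body (n : nat) (W : vec -> Prop) : Prop :=
  (forall P, W P -> sphere n P) /\
  sph_closed n W /\
  hemispherical n W /\
  (exists P, sph_interior n W P) /\
  (forall P Q, W P -> W Q -> forall X, arc n P Q X -> W X).

Definition polar (n : nat) (W : vec -> Prop) (Q : vec) : Prop :=
  sphere n Q /\ forall P, W P -> hemi n P Q.

Definition supports (n : nat) (P : vec) (W : vec -> Prop) : Prop :=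
  sphere n P /\ (forall X, W X -> hemi n P X) /\
  exists X, sph_boundary n W X /\ sph_boundary n (hemi n P) X.

Definition thickness (n : nat) (P Q : vec) : R := PI - sdist n P Q.

Definition width_cand (n : nat) (W : vec -> Prop) (P Q : vec) : Prop :=
  supports n Q W /\ Q <> P /\ Q <> vopp P /\
  (forall X, W X -> hemi n P X /\ hemi n Q X).

Definition width_eq (n : nat) (W : vec -> Prop) (P : vec) (w : R) : Prop :=
  (exists Q, width_cand n W P Q /\ thickness n P Q = w) /\
  (forall Q, width_cand n W P Q -> w <= thickness n P Q).

Definition constant_width (n : nat) (W : vec -> Prop) (rho : R) : Prop :=
  0 < rho < PI /\ forall P, supports n P W -> width_eq n W P rho.

(* If [W = W°], a supporting hemisphere [H(P)] touches [W] at a point [X] with [P.X = 0]; as [X]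
   lies in [W = W°], [H(X)] supports [W] too and gives a lune of thickness π/2, while every other
   supporting pole [Q] lies in [W] and hence has [P.Q >= 0], so no lune is thinner.
   Conversely, width π/2 means that any two supporting poles satisfy [P.Q >= 0] and that each
   supporting pole has an orthogonal one. A point [Y] of [W°] outside [W] is separated from [W]
   by a pole [P] of [W°]; moving [Y] away from [P] to the boundary of [W°], and then [P] away
   from the new point, produces two supporting poles at an obtuse angle. A point [Q] of [W]
   outside [W°] is excluded by moving from the centre of a hemisphere containing [W] towards [Q]
   until the first supporting pole [P]: a supporting pole orthogonal to [P] lies in [W° = W] and
   so would be strictly on the positive side of [P]. *)

From Stdlib Require Import Reals Lra Lia Psatz Rtopology ClassicalEpsilon Classical.
Open Scope R_scope.

Lemma sumR_ext m f g : (forall i, (i < m)%nat -> f i = g i) -> sumR m f = sumR m g.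
Proof.
  induction m as [|m IH]; simpl; intros H; auto.
  rewrite IH, H by (intros; apply H; lia) || lia; reflexivity.
Qed.

Lemma sumR_add m f g : sumR m (fun i => f i + g i) = sumR m f + sumR m g.
Proof. induction m as [|m IH]; simpl; [lra|]. rewrite IH; ring. Qed.

Lemma sumR_scale m a f : sumR m (fun i => a * f i) = a * sumR m f.
Proof. induction m as [|m IH]; simpl; [lra|]. rewrite IH; ring. Qed.

Lemma sumR_const0 m : sumR m (fun _ => 0) = 0.
Proof. induction m as [|m IH]; simpl; [|rewrite IH]; ring. Qed.

Lemma sumR_ge0 m f : (forall i, (i < m)%nat -> 0 <= f i) -> 0 <= sumR m f.
Proof.
  induction m as [|m IH]; simpl; intros H; [lra|].
  assert (0 <= f m) by (apply H; lia).
  assert (0 <= sumR m f) by (apply IH; intros; apply H; lia). lra.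
Qed.

Lemma sumR_ge_term m f i : (forall j, (j < m)%nat -> 0 <= f j) -> (i < m)%nat -> f i <= sumR m f.
Proof.
  induction m as [|m IH]; simpl; intros H Hi; [lia|].
  assert (0 <= f m) by (apply H; lia).
  assert (0 <= sumR m f) by (apply sumR_ge0; intros; apply H; lia).
  destruct (Nat.eq_dec i m) as [->|Hne]; [lra|].
  assert (f i <= sumR m f) by (apply IH; [intros; apply H|]; lia). lra.
Qed.

Lemma dot_sym n x y : dot n x y = dot n y x.
Proof. apply sumR_ext; intros; ring. Qed.

Lemma dot_addl n x y z : dot n (vadd x y) z = dot n x z + dot n y z.
Proof. unfold dot, vadd. rewrite <- sumR_add. apply sumR_ext; intros; ring. Qed.

Lemma dot_addr n x y z : dot n z (vadd x y) = dot n z x + dot n z y.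
Proof. rewrite !(dot_sym n z), dot_addl; reflexivity. Qed.

Lemma dot_scalel n a x y : dot n (vscale a x) y = a * dot n x y.
Proof. unfold dot, vscale. rewrite <- sumR_scale. apply sumR_ext; intros; ring. Qed.

Lemma dot_scaler n a x y : dot n y (vscale a x) = a * dot n y x.
Proof. rewrite !(dot_sym n y), dot_scalel; reflexivity. Qed.

Lemma dot_oppl n x y : dot n (vopp x) y = - dot n x y.
Proof.
  unfold dot, vopp. replace (- sumR _ _) with (-1 * sumR (S (S n)) (fun i => x i * y i)) by ring.
  rewrite <- sumR_scale. apply sumR_ext; intros; ring.
Qed.

Lemma dot_oppr n x y : dot n y (vopp x) = - dot n y x.
Proof. rewrite !(dot_sym n y), dot_oppl; reflexivity. Qed.

Lemma dot_self_ge0 n x : 0 <= dot n x x.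
Proof. apply sumR_ge0; intros; nra. Qed.

Tactic Notation "dot_expand" :=
  repeat rewrite ?dot_addl, ?dot_addr, ?dot_scalel, ?dot_scaler, ?dot_oppl, ?dot_oppr.
Tactic Notation "dot_expand" "in" hyp(H) :=
  repeat rewrite ?dot_addl, ?dot_addr, ?dot_scalel, ?dot_scaler, ?dot_oppl, ?dot_oppr in H.

Lemma Cauchy_Schwarz n x y : (dot n x y)^2 <= dot n x x * dot n y y.
Proof.
  assert (Hq : forall t, 0 <= dot n x x - 2 * t * dot n x y + t^2 * dot n y y).
  { intros t. pose proof (dot_self_ge0 n (vadd x (vscale (-t) y))) as H.
    dot_expand in H. rewrite (dot_sym n y x) in H. nra. }
  set (a := dot n y y) in *; set (b := dot n x y) in *; set (c := dot n x x) in *.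
  assert (0 <= a) by apply dot_self_ge0.
  destruct (Req_dec a 0) as [Ha0|Ha0].
  - destruct (Req_dec b 0) as [Hb0|Hb0]; [rewrite Hb0, Ha0; nra|].
    specialize (Hq ((c + 1) / (2 * b))). rewrite Ha0 in Hq.
    replace (c - 2 * ((c + 1) / (2 * b)) * b + ((c + 1) / (2 * b)) ^ 2 * 0) with (-1)
      in Hq by (field; auto). lra.
  - (* the quadratic in [t] is minimal at [t = b / a] *)
    specialize (Hq (b / a)).
    replace (c - 2 * (b / a) * b + (b / a) ^ 2 * a) with ((c * a - b^2) / a) in Hq by (field; auto).
    assert (0 <= c * a - b^2); [|nra].
    apply Rnot_lt_le; intro Hlt.
    assert ((c * a - b^2) / a < 0) by (apply Rdiv_neg_pos; lra). lra.
Qed.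

Lemma dot_sphere_bound n x y : sphere n x -> sphere n y -> -1 <= dot n x y <= 1.
Proof. intros [_ Hx] [_ Hy]. pose proof (Cauchy_Schwarz n x y). rewrite Hx, Hy in H. nra. Qed.

Definition tail_zero n (v : vec) := forall i, (S (S n) <= i)%nat -> v i = 0.

Lemma tail_zero_add n x y : tail_zero n x -> tail_zero n y -> tail_zero n (vadd x y).
Proof. intros Hx Hy i Hi; unfold vadd; rewrite Hx, Hy; auto; ring. Qed.

Lemma tail_zero_scale n a x : tail_zero n x -> tail_zero n (vscale a x).
Proof. intros Hx i Hi; unfold vscale; rewrite Hx; auto; ring. Qed.

Lemma tail_zero_opp n x : tail_zero n x -> tail_zero n (vopp x).
Proof. intros Hx i Hi; unfold vopp; rewrite Hx; auto; ring. Qed.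

Lemma sphere_opp n P : sphere n P -> sphere n (vopp P).
Proof. intros [HP HPP]; split; [apply tail_zero_opp; auto|]. dot_expand; lra. Qed.

Lemma vnorm_pos n v : 0 < dot n v v -> 0 < vnorm n v.
Proof. apply sqrt_lt_R0. Qed.

Lemma vnorm_sq n v : vnorm n v * vnorm n v = dot n v v.
Proof. apply sqrt_sqrt, dot_self_ge0. Qed.

Definition normalize n (v : vec) := vscale (/ vnorm n v) v.

Lemma normalize_sphere n v : tail_zero n v -> 0 < dot n v v -> sphere n (normalize n v).
Proof.
  intros Hv Hpos. split; [apply tail_zero_scale; auto|].
  unfold normalize. dot_expand. rewrite <- vnorm_sq.
  pose proof (vnorm_pos n v Hpos). field. lra.
Qed.

Lemma dot_normalizel n v X : dot n (normalize n v) X = / vnorm n v * dot n v X.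
Proof. apply dot_scalel. Qed.

Lemma vdist_self n X : vdist n X X = 0.
Proof.
  unfold vdist, vnorm. replace (dot n (vadd X (vopp X)) (vadd X (vopp X))) with 0.
  - apply sqrt_0.
  - dot_expand. ring.
Qed.

Lemma vdist_sym n X Y : vdist n X Y = vdist n Y X.
Proof. unfold vdist, vnorm. f_equal. dot_expand. rewrite (dot_sym n X Y). ring. Qed.

Lemma vdist_lt n X Y e : 0 < e ->
  dot n (vadd X (vopp Y)) (vadd X (vopp Y)) < e * e -> vdist n X Y < e.
Proof.
  intros He Hd. unfold vdist, vnorm. rewrite <- (sqrt_square e) by lra.
  apply sqrt_lt_1; [apply dot_self_ge0|nra|exact Hd].
Qed.

Lemma dot_dist_Lipschitz n P X Y : sphere n P -> Rabs (dot n P X - dot n P Y) <= vdist n X Y.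
Proof.
  intros [_ HP]. unfold vdist, vnorm.
  replace (dot n P X - dot n P Y) with (dot n P (vadd X (vopp Y))) by (dot_expand; ring).
  pose proof (Cauchy_Schwarz n P (vadd X (vopp Y))) as H. rewrite HP in H.
  rewrite <- sqrt_Rsqr_abs. apply sqrt_le_1; [apply Rle_0_sqr|apply dot_self_ge0|].
  unfold Rsqr. lra.
Qed.

(* The witness tilts [X] slightly towards [-P]. *)
Lemma sphere_perturb_neg n P X eps : sphere n P -> sphere n X -> dot n P X = 0 -> 0 < eps ->
  exists Y, sphere n Y /\ vdist n Y X < eps /\ dot n P Y < 0.
Proof.
  intros [HPz HPP] [HXz HXX] HPX He.
  set (d := eps / 2). set (v := vadd X (vscale (- d) P)).
  assert (Hvv : dot n v v = 1 + d^2).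
  { unfold v; dot_expand. rewrite (dot_sym n X P), HPX, HPP, HXX. ring. }
  assert (Hd : 0 < d) by (unfold d; lra).
  assert (Hvpos : 0 < dot n v v) by nra.
  set (s := vnorm n v).
  assert (Hs : 0 < s) by (apply vnorm_pos; auto).
  assert (Hss : s * s = 1 + d^2) by (unfold s; rewrite vnorm_sq; auto).
  assert (Hs1 : 1 <= s) by nra.
  exists (normalize n v). split; [|split].
  - apply normalize_sphere; [apply tail_zero_add, tail_zero_scale|]; auto.
  - apply vdist_lt; [lra|].
    replace (dot n (vadd (normalize n v) (vopp X)) (vadd (normalize n v) (vopp X)))
      with (2 - 2 / s).
    + (* [2 - 2/s <= 2 (s - 1) <= d^2] since [s^2 = 1 + d^2] *)
      assert (2 - 2 / s <= 2 * (s - 1)).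
      { apply (Rmult_le_reg_r s); [lra|]. field_simplify; nra. }
      unfold d in *. nra.
    + unfold normalize; fold s. dot_expand. rewrite Hvv. unfold v. dot_expand.
      rewrite (dot_sym n X P), HPX, HXX, <- Hss. field. lra.
  - rewrite dot_sym, dot_normalizel. fold s. unfold v. dot_expand.
    rewrite (dot_sym n X P), HPX, HPP.
    assert (0 < / s) by (apply Rinv_0_lt_compat; auto). fold s. nra.
Qed.

Lemma closed_boundary_mem n A X : sph_closed n A -> sph_boundary n A X -> A X.
Proof.
  intros Hc [HX Hb]. apply NNPP; intro HnA.
  destruct (Hc X HX HnA) as [e [He Hfar]].
  destruct (Hb e He) as [[Y [HY [Hd HAY]]] _]. exact (Hfar Y HY Hd HAY).
Qed.

Lemma hemi_boundary_dot0 n P X : sphere n P -> sph_boundary n (hemi n P) X -> dot n P X = 0.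
Proof.
  intros HP [HX Hb].
  destruct (Rtotal_order (dot n P X) 0) as [Hl|[He|Hg]]; auto; exfalso.
  - destruct (Hb (- dot n P X) ltac:(lra)) as [[Y [HY [Hd [_ HPY]]]] _].
    pose proof (dot_dist_Lipschitz n P X Y HP) as HL.
    rewrite vdist_sym in Hd. unfold Rabs in HL; destruct Rcase_abs in HL; lra.
  - destruct (Hb (dot n P X) ltac:(lra)) as [_ [Y [HY [Hd HnY]]]].
    apply HnY. split; auto.
    pose proof (dot_dist_Lipschitz n P X Y HP) as HL.
    rewrite vdist_sym in Hd. unfold Rabs in HL; destruct Rcase_abs in HL; lra.
Qed.

Lemma polar_iff n W Y : polar n W Y <-> sphere n Y /\ forall X, W X -> 0 <= dot n Y X.
Proof.
  split.
  - intros [HY H]. split; auto. intros X HX. destruct (H X HX). rewrite dot_sym; lra.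
  - intros [HY H]. split; auto. intros X HX. split; auto. rewrite dot_sym; specialize (H X HX); lra.
Qed.

Lemma supports_iff n W P : (forall X, W X -> sphere n X) -> sph_closed n W ->
  supports n P W <-> polar n W P /\ exists X, W X /\ dot n P X = 0.
Proof.
  intros Hs Hc. rewrite polar_iff. split.
  - intros [HP [Hsub [X [HbW HbH]]]]. split; [split; auto|].
    + intros Y HY. destruct (Hsub Y HY). lra.
    + exists X. split; [apply (closed_boundary_mem n W X Hc HbW)|].
      apply (hemi_boundary_dot0 n P X HP HbH).
  - intros [[HP Hsub] [X [HWX HPX]]]. pose proof (Hs X HWX) as HX.
    assert (Hout : forall e, 0 < e -> exists Y, sphere n Y /\ vdist n Y X < e /\ dot n P Y < 0)
      by (intros; apply sphere_perturb_neg; auto).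
    assert (HXX : vdist n X X = 0) by apply vdist_self.
    split; [|split]; auto.
    + intros Y HY. split; auto. specialize (Hsub Y HY). lra.
    + exists X. split; split; auto; intros e He; split.
      * exists X. split; [|split]; auto; lra.
      * destruct (Hout e He) as [Y [HY [Hd HPY]]]. exists Y. split; [|split]; auto.
        intro HWY. specialize (Hsub Y HWY). lra.
      * exists X. split; [|split]; [| |split]; auto; lra.
      * destruct (Hout e He) as [Y [HY [Hd HPY]]]. exists Y. split; [|split]; auto.
        intros [_ HPY']. lra.
Qed.

Definition strictly_increasing (phi : nat -> nat) := forall j, (phi j < phi (S j))%nat.

Lemma strictly_increasing_lt phi : strictly_increasing phi ->
  forall i j, (i < j)%nat -> (phi i < phi j)%nat.
Proof.
  intros H i j Hij. induction j as [|j IH]; [lia|].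
  destruct (Nat.eq_dec i j) as [->|]; [apply H|]. specialize (IH ltac:(lia)). specialize (H j). lia.
Qed.

Lemma strictly_increasing_ge phi : strictly_increasing phi -> forall j, (j <= phi j)%nat.
Proof. intros H j; induction j; [lia|]. specialize (H j); lia. Qed.

Lemma strictly_increasing_comp phi psi : strictly_increasing phi -> strictly_increasing psi ->
  strictly_increasing (fun j => phi (psi j)).
Proof. intros Hphi Hpsi j. apply strictly_increasing_lt; auto. Qed.

Lemma inv_INR_succ_pos j : 0 < / (INR j + 1).
Proof. apply Rinv_0_lt_compat. pose proof (pos_INR j). lra. Qed.

Lemma Un_cv_of_bound a l : (forall j, Rabs (a j - l) <= / (INR j + 1)) -> Un_cv a l.
Proof.
  intros H eps He. destruct (archimed_cor1 eps He) as [N [HN HN0]].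
  exists N. intros j Hj. unfold Rdist. eapply Rle_lt_trans; [apply H|].
  eapply Rle_lt_trans; [|apply HN]. apply Rinv_le_contravar.
  - apply lt_0_INR; auto.
  - apply le_INR in Hj. lra.
Qed.

Lemma Un_cv_subseq psi a l : strictly_increasing psi -> Un_cv a l -> Un_cv (fun j => a (psi j)) l.
Proof.
  intros Hs H eps He. destruct (H eps He) as [N HN]. exists N. intros j Hj.
  apply HN. pose proof (strictly_increasing_ge psi Hs j). lia.
Qed.

Lemma Un_cv_const c : Un_cv (fun _ => c) c.
Proof. intros eps He. exists O. intros. unfold Rdist. rewrite Rminus_diag, Rabs_R0. lra. Qed.

Lemma Un_cv_sumR m (a : nat -> vec) l : (forall i, (i < m)%nat -> Un_cv (fun j => a j i) (l i)) ->
  Un_cv (fun j => sumR m (a j)) (sumR m l).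
Proof.
  induction m as [|m IH]; intros Ha; simpl.
  - apply Un_cv_const.
  - apply CV_plus; [apply IH; intros|]; apply Ha; lia.
Qed.

Lemma bounded_cv_subseq (u : nat -> R) : (forall j, -1 <= u j <= 1) ->
  exists phi l, strictly_increasing phi /\ Un_cv (fun j => u (phi j)) l.
Proof.
  intros Hu.
  destruct (Bolzano_Weierstrass u (fun c => -1 <= c <= 1) (compact_P3 _ _) Hu) as [l Hl].
  assert (Hnear : forall N k, {p | (N <= p)%nat /\ Rabs (u p - l) < / (INR k + 1)}).
  { intros N k. apply constructive_indefinite_description.
    set (e := mkposreal _ (inv_INR_succ_pos k)).
    destruct (Hl (disc l e) N) as [p [Hp Hd]]; [exists e; intros y Hy; exact Hy|].
    exists p. split; auto. }
  (* [phi (S j)] is a term beyond [phi j] within [1/(j+2)] of [l] *)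
  set (phi := fix f (j : nat) : nat :=
         match j with O => proj1_sig (Hnear O O) | S j' => proj1_sig (Hnear (S (f j')) (S j')) end).
  exists phi, l. split.
  - intros j. exact (proj1 (proj2_sig (Hnear (S (phi j)) (S j)))).
  - apply Un_cv_of_bound. intros [|j].
    + left. exact (proj2 (proj2_sig (Hnear O O))).
    + left. exact (proj2 (proj2_sig (Hnear (S (phi j)) (S j)))).
Qed.

Lemma bounded_vec_cv_subseq k (u : nat -> vec) : (forall j i, -1 <= u j i <= 1) ->
  exists phi l, strictly_increasing phi /\
    forall i, (i < k)%nat -> Un_cv (fun j => u (phi j) i) (l i).
Proof.
  induction k as [|k IH].
  - intros _. exists (fun j => j), (fun _ => 0). split; [intros j; lia|intros; lia].
  - intros Hu. destruct (IH Hu) as [phi [l [Hphi Hcv]]].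
    destruct (bounded_cv_subseq (fun j => u (phi j) k) (fun j => Hu _ _)) as [psi [lk [Hpsi Hcvk]]].
    exists (fun j => phi (psi j)), (fun i => if Nat.eq_dec i k then lk else l i). split.
    + apply strictly_increasing_comp; auto.
    + intros i Hi. destruct (Nat.eq_dec i k) as [->|Hne]; [exact Hcvk|].
      apply (Un_cv_subseq psi (fun j => u (phi j) i)); auto. apply Hcv; lia.
Qed.

Lemma sphere_coord_bound n X i : sphere n X -> -1 <= X i <= 1.
Proof.
  intros [Hz Hd]. destruct (Compare_dec.lt_dec i (S (S n))) as [Hi|Hi].
  - assert (X i * X i <= 1).
    { rewrite <- Hd. apply (sumR_ge_term _ (fun i => X i * X i)); auto. intros; nra. }
    nra.
  - rewrite Hz by lia. lra.
Qed.

Definition vcv n (u : nat -> vec) (l : vec) :=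
  forall i, (i < S (S n))%nat -> Un_cv (fun j => u j i) (l i).

Lemma vcv_dot n u v l m : vcv n u l -> vcv n v m -> Un_cv (fun j => dot n (u j) (v j)) (dot n l m).
Proof.
  intros Hu Hv. apply (Un_cv_sumR _ (fun j i => u j i * v j i) (fun i => l i * m i)).
  intros i Hi. apply CV_mult; auto.
Qed.

Lemma vcv_const n Y : vcv n (fun _ => Y) Y.
Proof. intros i _. apply Un_cv_const. Qed.

Lemma sphere_seq_cv_subseq n u : (forall j, sphere n (u j)) ->
  exists phi l, strictly_increasing phi /\ sphere n l /\ vcv n (fun j => u (phi j)) l.
Proof.
  intros Hu.
  destruct (bounded_vec_cv_subseq (S (S n)) u) as [phi [l0 [Hphi Hcv]]];
    [intros; apply (sphere_coord_bound n), Hu|].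
  set (l := fun i => if Compare_dec.lt_dec i (S (S n)) then l0 i else 0).
  assert (Hcvl : vcv n (fun j => u (phi j)) l).
  { intros i Hi. unfold l. destruct Compare_dec.lt_dec; [apply Hcv; auto|lia]. }
  exists phi, l. split; [|split]; auto. split.
  - intros i Hi. unfold l. destruct Compare_dec.lt_dec; [lia|auto].
  - apply (UL_sequence _ _ _ (vcv_dot _ _ _ _ _ Hcvl Hcvl)).
    eapply Un_cv_ext; [intros j; symmetry; apply (proj2 (Hu (phi j)))|].
    apply Un_cv_const.
Qed.

Lemma closed_vcv_mem n A u l : (forall X, A X -> sphere n X) -> sph_closed n A ->
  (forall j, A (u j)) -> sphere n l ->
  vcv n u l -> A l.
Proof.
  intros Hs Hc Hu Hl Hcv. apply NNPP; intro HnA. destruct (Hc l Hl HnA) as [e [He Hfar]].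
  set (d := fun j => vadd (u j) (vopp l)).
  assert (Hd : vcv n d (fun _ => 0)).
  { intros i Hi. unfold d, vadd, vopp. replace 0 with (l i + - l i) by ring.
    apply CV_plus; [apply Hcv; auto|apply Un_cv_const]. }
  pose proof (vcv_dot _ _ _ _ _ Hd Hd) as Hdd.
  replace (dot n (fun _ => 0) (fun _ => 0)) with 0 in Hdd
    by (unfold dot; rewrite (sumR_ext _ _ (fun _ => 0)), sumR_const0 by (intros; ring); auto).
  destruct (Hdd (e * e) ltac:(nra)) as [N HN]. specialize (HN N (le_n N)).
  unfold Rdist in HN. rewrite Rminus_0_r, Rabs_right in HN by (apply Rle_ge, dot_self_ge0).
  exact (Hfar (u N) (Hs _ (Hu N)) (vdist_lt n _ _ e He HN) (Hu N)).
Qed.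

Lemma lub_approx (T : R -> Prop) s b : is_lub T s -> b < s -> exists t, T t /\ b < t.
Proof.
  intros [Hub Hlub] Hb. apply NNPP; intro Hn.
  assert (is_upper_bound T b).
  { intros t Ht. apply Rnot_lt_le; intro Hbt. apply Hn; exists t; auto. }
  specialize (Hlub _ H). lra.
Qed.

Lemma closed_sphere_argmax n A Y : (forall X, A X -> sphere n X) -> sph_closed n A ->
  (exists X, A X) -> exists X0, A X0 /\ forall X, A X -> dot n Y X <= dot n Y X0.
Proof.
  intros Hs Hc Hne.
  set (E := fun r => exists X, A X /\ r = dot n Y X).
  assert (Hb : bound E).
  { exists (1 + dot n Y Y). intros r [X [HX ->]]. pose proof (Cauchy_Schwarz n Y X).
    rewrite (proj2 (Hs X HX)) in H. pose proof (dot_self_ge0 n Y). nra. }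
  assert (HE : exists r, E r) by (destruct Hne as [X HX]; exists (dot n Y X), X; auto).
  destruct (completeness E Hb HE) as [s Hsup].
  assert (Hk : forall k, exists X, A X /\ s - / (INR k + 1) < dot n Y X).
  { intros k. destruct (lub_approx E s (s - / (INR k + 1)) Hsup) as [r [[X [HX ->]] Hr]];
      [pose proof (inv_INR_succ_pos k); lra|eauto]. }
  set (u := fun k => proj1_sig (constructive_indefinite_description _ (Hk k))).
  assert (Hu : forall k, A (u k) /\ s - / (INR k + 1) < dot n Y (u k))
    by (intros k; exact (proj2_sig (constructive_indefinite_description _ (Hk k)))).
  assert (Hle : forall X, A X -> dot n Y X <= s) by (intros X HX; apply Hsup; exists X; auto).
  destruct (sphere_seq_cv_subseq n u) as [phi [l [Hphi [Hl Hcv]]]]; [intros; apply Hs, Hu|].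
  exists l. split; [apply (closed_vcv_mem n A (fun j => u (phi j))); auto; intros; apply Hu|].
  replace (dot n Y l) with s; [exact Hle|].
  apply (UL_sequence (fun j => dot n Y (u (phi j))));
    [|apply (vcv_dot _ _ _ _ _ (vcv_const n Y) Hcv)].
  apply Un_cv_of_bound. intros j. destruct (Hu (phi j)) as [HA Hlt].
  pose proof (Hle _ HA).
  assert (/ (INR (phi j) + 1) <= / (INR j + 1)).
  { apply Rinv_le_contravar; [pose proof (pos_INR j); lra|].
    pose proof (le_INR _ _ (strictly_increasing_ge phi Hphi j)). lra. }
  apply Rabs_le. lra.
Qed.

Definition lerp (t : R) (a b : vec) : vec := vadd (vscale (1 - t) a) (vscale t b).

Lemma dot_lerpl n t a b X : dot n (lerp t a b) X = (1 - t) * dot n a X + t * dot n b X.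
Proof. unfold lerp. dot_expand. reflexivity. Qed.

Lemma lerp_tail_zero n t a b : tail_zero n a -> tail_zero n b -> tail_zero n (lerp t a b).
Proof. intros; apply tail_zero_add; apply tail_zero_scale; auto. Qed.

Lemma lerp_self_dot_pos n t a b : sphere n a -> sphere n b -> 0 <= dot n a b -> 0 <= t <= 1 ->
  0 < dot n (lerp t a b) (lerp t a b).
Proof.
  intros [_ Ha] [_ Hb] Hab Ht. rewrite dot_lerpl. unfold lerp. dot_expand.
  rewrite Ha, Hb, (dot_sym n b a).
  assert (0 <= t * (1 - t) * dot n a b) by (apply Rmult_le_pos; nra). nra.
Qed.

Lemma arc_point_normalize n P Q t : arc_point n P Q t = normalize n (lerp t P Q).
Proof. reflexivity. Qed.

Lemma polar_interior_pos n W P C : sph_interior n W C -> polar n W P -> 0 < dot n P C.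
Proof.
  intros [HC [e [He Hball]]] HP. apply polar_iff in HP. destruct HP as [HP Hnn].
  assert (HWC : W C) by (apply Hball; auto; rewrite vdist_self; lra).
  destruct (Req_dec (dot n P C) 0) as [E|E]; [exfalso|specialize (Hnn C HWC); lra].
  destruct (sphere_perturb_neg n P C e HP HC E He) as [Y [HY [Hd HPY]]].
  specialize (Hnn Y (Hball Y HY Hd)). lra.
Qed.

Lemma nonpos_of_small_linear_bound k : (forall t, 0 < t <= 1/4 -> 2 * (1 - t) * k <= t) -> k <= 0.
Proof.
  intros H. apply Rnot_lt_le; intro Hk.
  set (t := Rmin (1/4) (k/2)).
  assert (0 < t <= 1/4) by (split; [apply Rmin_glb_lt|apply Rmin_l]; lra).
  assert (t <= k/2) by apply Rmin_r.
  specialize (H t ltac:(lra)). nra.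
Qed.

(* If [X0] maximizes [Y.] along every arc from [X0] to [X], the derivative of
   [t |-> Y.arc_point X0 X t] at [t = 0], a positive multiple of [Y.X - m X0.X], is nonpositive. *)
Lemma arc_max_first_order n Y X0 X : sphere n Y -> sphere n X0 -> sphere n X ->
  0 < dot n Y X0 ->
  (forall t, 0 <= t <= 1 -> dot n Y (arc_point n X0 X t) <= dot n Y X0) ->
  dot n Y X <= dot n Y X0 * dot n X0 X.
Proof.
  intros HY HX0 HX Hm Hmax. set (m := dot n Y X0) in *.
  set (a := dot n Y X). set (c := dot n X0 X).
  pose proof (dot_sphere_bound n X0 X HX0 HX). pose proof (dot_sphere_bound n Y X HY HX).
  apply Rnot_lt_le; intro Hlt. fold a c in Hlt, H, H0.
  enough (m * (a - m * c) <= 0) by nra.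
  apply nonpos_of_small_linear_bound. intros t Ht.
  set (u := lerp t X0 X).
  assert (Huu : dot n u u = (1 - t)^2 + 2 * t * (1 - t) * c + t^2).
  { unfold u. rewrite dot_lerpl. unfold lerp. dot_expand.
    rewrite (proj2 HX0), (proj2 HX), (dot_sym n X X0). fold c. ring. }
  assert (Hupos : 0 < dot n u u).
  { assert (0 <= t * (1 - t) * (c + 1)) by (apply Rmult_le_pos; nra). rewrite Huu; nra. }
  pose proof (vnorm_pos n u Hupos) as Hr. pose proof (vnorm_sq n u) as Hr2.
  assert (HYu : dot n Y u = (1 - t) * m + t * a)
    by (unfold u; rewrite dot_sym, dot_lerpl, !(dot_sym n _ Y); reflexivity).
  assert (Hbound : dot n Y u <= m * vnorm n u).
  { specialize (Hmax t ltac:(lra)).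
    rewrite arc_point_normalize, dot_sym, dot_normalizel, dot_sym in Hmax.
    fold u in Hmax. apply (Rmult_le_reg_l (/ vnorm n u)); [apply Rinv_0_lt_compat; auto|].
    replace (/ vnorm n u * (m * vnorm n u)) with m by (field; lra). exact Hmax. }
  (* square the bound; [Y.u > 0] because [a > m c >= -m] *)
  assert (Hsq : (dot n Y u)^2 <= m^2 * dot n u u).
  { rewrite <- Hr2. replace (m^2 * (vnorm n u * vnorm n u)) with ((m * vnorm n u)^2) by ring.
    assert (0 <= m * (c + 1)) by (apply Rmult_le_pos; lra).
    assert (0 <= t * (a + m)) by (apply Rmult_le_pos; lra).
    apply pow_incr. split; [rewrite HYu; nra|exact Hbound]. }
  rewrite HYu, Huu in Hsq.
  assert (Hm1 : m <= 1) by (pose proof (dot_sphere_bound n Y X0 HY HX0); unfold m; lra).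
  assert (Hk : t * (2 * (1 - t) * (m * (a - m * c)) - t * (m^2 - a^2)) <= 0) by nra.
  assert (2 * (1 - t) * (m * (a - m * c)) <= t * (m^2 - a^2)).
  { apply Rnot_lt_le; intro Hgt.
    assert (0 < t * (2 * (1 - t) * (m * (a - m * c)) - t * (m^2 - a^2)))
      by (apply Rmult_lt_0_compat; lra). lra. }
  assert (0 <= t * (1 - m^2 + a^2)) by (apply Rmult_le_pos; nra).
  nra.
Qed.

(* The point [X0] of [W] nearest to [Y] has [W] on the nonnegative side of [m X0 - Y]. *)
Lemma polar_separation n W Y : (forall X, W X -> sphere n X) -> sph_closed n W ->
  (exists X, W X) -> (forall P Q, W P -> W Q -> forall X, arc n P Q X -> W X) ->
  sphere n Y -> ~ W Y -> exists P, polar n W P /\ dot n P Y < 0.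
Proof.
  intros Hs Hc Hne Hconv HY HnY.
  destruct (closed_sphere_argmax n W Y Hs Hc Hne) as [X0 [HX0 Hmax]].
  pose proof (Hs X0 HX0) as HX0s. set (m := dot n Y X0) in *.
  destruct (Rle_or_lt m 0) as [Hm|Hm].
  - exists (vopp Y). rewrite polar_iff. split; [split; [apply sphere_opp; auto|]|].
    + intros X HX. rewrite dot_oppl. specialize (Hmax X HX). lra.
    + rewrite dot_oppl, (proj2 HY). lra.
  - assert (Hm1 : m < 1).
    { apply Rnot_le_lt; intro Hm1. destruct (Hc Y HY HnY) as [e [He Hfar]].
      apply (Hfar X0 HX0s); auto. replace (vdist n X0 Y) with 0; [lra|].
      unfold vdist, vnorm. rewrite <- sqrt_0. f_equal. dot_expand.
      pose proof (dot_sphere_bound n Y X0 HY HX0s) as Hb. fold m in Hb.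
      rewrite (proj2 HY), (proj2 HX0s), (dot_sym n X0 Y). fold m. replace m with 1 by lra. ring. }
    assert (Hvar : forall X, W X -> dot n Y X <= m * dot n X0 X).
    { intros X HX. apply arc_max_first_order; auto.
      intros t Ht. apply Hmax, (Hconv X0 X HX0 HX). exists t; auto. }
    set (w := vadd (vscale m X0) (vopp Y)).
    assert (Hww : dot n w w = 1 - m^2).
    { unfold w. dot_expand. rewrite (proj2 HY), (proj2 HX0s), (dot_sym n X0 Y). fold m. ring. }
    assert (Hwpos : 0 < dot n w w) by (rewrite Hww; nra).
    pose proof (Rinv_0_lt_compat _ (vnorm_pos n w Hwpos)) as Hr.
    exists (normalize n w). rewrite polar_iff. split; [split|].
    + apply normalize_sphere; auto.
      apply tail_zero_add; [apply tail_zero_scale; exact (proj1 HX0s)|].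
      apply tail_zero_opp; exact (proj1 HY).
    + intros X HX. rewrite dot_normalizel. apply Rmult_le_pos; [lra|].
      unfold w. dot_expand. specialize (Hvar X HX). lra.
    + rewrite dot_normalizel. apply Rmult_pos_neg; [lra|].
      unfold w. dot_expand. rewrite (proj2 HY), (dot_sym n X0 Y). fold m. nra.
Qed.

Lemma affine_neg_beyond al be s : 0 <= al -> 0 <= s -> (1 - s) * al + s * be < 0 ->
  exists r, r < s /\ forall t, r < t -> (1 - t) * al + t * be < 0.
Proof.
  intros Hal Hs Hneg. assert (Hslope : be < al) by nra.
  exists (al / (al - be)). split.
  - apply (Rmult_lt_reg_r (al - be)); [lra|]. unfold Rdiv. rewrite Rmult_assoc, Rinv_l by lra. lra.
  - intros t Ht. apply (Rmult_lt_compat_r (al - be)) in Ht; [|lra].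
    unfold Rdiv in Ht. rewrite Rmult_assoc, Rinv_l in Ht by lra. lra.
Qed.

Lemma segment_last_nonneg n W a b : (forall X, W X -> sphere n X) -> sph_closed n W ->
  sphere n a -> sphere n b ->
  (forall X, W X -> 0 <= dot n a X) -> (exists X, W X /\ dot n b X < 0) ->
  exists t, 0 <= t < 1 /\ (forall X, W X -> 0 <= dot n (lerp t a b) X) /\
    exists X, W X /\ dot n (lerp t a b) X = 0.
Proof.
  intros Hs Hc Ha Hb Hapos [Xb [HXb Hbneg]].
  set (T := fun t => 0 <= t <= 1 /\ forall X, W X -> 0 <= dot n (lerp t a b) X).
  assert (HT0 : T 0) by (split; [lra|intros X HX; rewrite dot_lerpl; specialize (Hapos X HX); lra]).
  assert (Hbd : bound T) by (exists 1; intros t [Ht _]; lra).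
  destruct (completeness T Hbd (ex_intro _ 0 HT0)) as [ts Hts].
  assert (Hts01 : 0 <= ts <= 1) by (split; [apply Hts|apply Hts; intros t [Ht _]]; auto; lra).
  assert (HtsT : forall X, W X -> 0 <= dot n (lerp ts a b) X).
  { intros X HX. rewrite dot_lerpl. apply Rnot_lt_le; intro Hlt.
    destruct (affine_neg_beyond _ _ ts (Hapos X HX) (proj1 Hts01) Hlt) as [r [Hr Hbeyond]].
    destruct (lub_approx T ts r Hts Hr) as [t [[_ Ht] Hrt]].
    specialize (Ht X HX). rewrite dot_lerpl in Ht. specialize (Hbeyond t Hrt). lra. }
  assert (Hts1 : ts < 1).
  { apply Rnot_le_lt; intro Hge. specialize (HtsT Xb HXb). rewrite dot_lerpl in HtsT.
    replace ts with 1 in HtsT by lra. lra. }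
  exists ts. split; [lra|split; auto].
  destruct (closed_sphere_argmax n W (vopp (lerp ts a b)) Hs Hc (ex_intro _ Xb HXb))
    as [X1 [HX1 Hmin]].
  exists X1. split; auto. pose proof (HtsT X1 HX1) as Hmu.
  destruct Hmu as [Hmu|Hmu]; [exfalso|auto].
  set (mu := dot n (lerp ts a b) X1) in *.
  (* a strictly positive minimum would let [ts] be pushed further *)
  set (e := Rmin (mu / 2) (1 - ts)).
  assert (He : 0 < e <= mu / 2 /\ e <= 1 - ts)
    by (split; [split; [apply Rmin_glb_lt|apply Rmin_l]|apply Rmin_r]; lra).
  assert (T (ts + e)).
  { split; [lra|]. intros X HX. specialize (Hmin X HX). rewrite !dot_oppl in Hmin.
    pose proof (dot_sphere_bound n a X Ha (Hs X HX)).
    pose proof (dot_sphere_bound n b X Hb (Hs X HX)).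
    fold mu in Hmin. rewrite dot_lerpl in *. nra. }
  pose proof (proj1 Hts _ H). lra.
Qed.

Lemma supports_on_segment n W a b : (forall X, W X -> sphere n X) -> sph_closed n W ->
  sphere n a -> sphere n b -> 0 <= dot n a b ->
  (forall X, W X -> 0 <= dot n a X) -> (exists X, W X /\ dot n b X < 0) ->
  exists t c P, 0 <= t < 1 /\ 0 < c /\ supports n P W /\
    forall Z, dot n P Z = c * ((1 - t) * dot n a Z + t * dot n b Z).
Proof.
  intros Hs Hc Ha Hb Hab Hapos Hbneg.
  destruct (segment_last_nonneg n W a b Hs Hc Ha Hb Hapos Hbneg)
    as [t [Ht [Hnn [X1 [HX1 Hzero]]]]].
  set (u := lerp t a b).
  assert (Hu : 0 < dot n u u) by (apply lerp_self_dot_pos; auto; lra).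
  pose proof (Rinv_0_lt_compat _ (vnorm_pos n u Hu)) as Hc0.
  exists t, (/ vnorm n u), (normalize n u). split; [|split; [|split]]; auto.
  - rewrite supports_iff by auto. rewrite polar_iff. split; [split|].
    + apply normalize_sphere; auto. apply lerp_tail_zero; [exact (proj1 Ha)|exact (proj1 Hb)].
    + intros X HX. rewrite dot_normalizel. apply Rmult_le_pos; [lra|]. apply Hnn; auto.
    + exists X1. split; auto. rewrite dot_normalizel. fold u in Hzero. rewrite Hzero. ring.
  - intros Z. rewrite dot_normalizel. unfold u. rewrite dot_lerpl. reflexivity.
Qed.

Lemma polar_push_to_support n W P Y C : (forall X, W X -> sphere n X) -> sph_closed n W ->
  W C -> 0 < dot n P C -> polar n W P -> polar n W Y -> dot n P Y < 0 ->
  exists Y', supports n Y' W /\ dot n P Y' < 0.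
Proof.
  intros Hs Hc HC HPC HP HY HPY. rewrite polar_iff in HP, HY.
  destruct (supports_on_segment n W Y (vopp P) Hs Hc (proj1 HY) (sphere_opp n P (proj1 HP)))
    as [t [c [Y' [Ht [Hc0 [HY' Hdot]]]]]].
  - rewrite dot_oppr, dot_sym. lra.
  - apply HY.
  - exists C. rewrite dot_oppl. split; auto; lra.
  - exists Y'. split; auto. rewrite dot_sym, Hdot, dot_oppl, (proj2 (proj1 HP)), (dot_sym n Y P).
    apply Rmult_pos_neg; [lra|nra].
Qed.

Lemma interior_mem n W C : sph_interior n W C -> W C.
Proof. intros [HC [e [He Hball]]]. apply Hball; auto. rewrite vdist_self; lra. Qed.

Lemma hemispherical_pos n W : (forall X, W X -> sphere n X) -> hemispherical n W ->
  exists C, sphere n C /\ forall X, W X -> 0 < dot n C X.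
Proof.
  intros Hs [P [HP Hout]]. exists (vopp P). split; [apply sphere_opp; auto|].
  intros X HX. rewrite dot_oppl. apply Ropp_0_gt_lt_contravar. apply Rnot_le_lt; intro Hge.
  apply (Hout X HX). split; auto. lra.
Qed.

Lemma thickness_PI2_le_iff n P Q : sphere n P -> sphere n Q ->
  PI / 2 <= thickness n P Q <-> 0 <= dot n P Q.
Proof.
  intros HP HQ. pose proof (dot_sphere_bound n P Q HP HQ) as Hb.
  pose proof (acos_bound (dot n P Q)). unfold thickness, sdist. split; intros Hle.
  - rewrite <- (cos_acos _ Hb). apply cos_ge_0; lra.
  - enough (acos (dot n P Q) <= PI / 2) by lra. apply Rnot_lt_le; intro Hlt.
    assert (Hcos : cos (acos (dot n P Q)) < 0) by (apply cos_lt_0; lra).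
    rewrite cos_acos in Hcos by exact Hb. lra.
Qed.

Lemma thickness_eq_PI2_iff n P Q : sphere n P -> sphere n Q ->
  thickness n P Q = PI / 2 <-> dot n P Q = 0.
Proof.
  intros HP HQ. pose proof (dot_sphere_bound n P Q HP HQ) as Hb. unfold thickness, sdist. split.
  - intros H. rewrite <- (cos_acos _ Hb). replace (acos (dot n P Q)) with (PI / 2) by lra.
    apply cos_PI2.
  - intros ->. rewrite acos_0. field.
Qed.

Lemma constant_width_PI2_of_self_polar n W : convex_body n W ->
  (forall Q, W Q <-> polar n W Q) -> constant_width n W (PI / 2).
Proof.
  intros [Hs [Hc _]] Hself. pose proof PI_RGT_0.
  split; [lra|]. intros P HsP.
  pose proof HsP as HsP'. rewrite supports_iff in HsP' by auto.
  destruct HsP' as [HPpol [X [HX HPX]]].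
  pose proof HPpol as HPpol'. rewrite polar_iff in HPpol'. destruct HPpol' as [HP HPnn].
  pose proof (proj1 (Hself X) HX) as HXpol. rewrite polar_iff in HXpol.
  assert (HWP : W P) by (apply Hself; exact HPpol).
  split.
  - exists X. split; [split; [|split; [|split]]|].
    + rewrite supports_iff by auto. split; [rewrite polar_iff; exact HXpol|].
      exists P. split; auto. rewrite dot_sym; auto.
    + intros ->. rewrite (proj2 HP) in HPX. lra.
    + intros ->. rewrite dot_oppr, (proj2 HP) in HPX. lra.
    + intros Y HY. split; split; auto; apply Rle_ge; [apply HPnn|apply HXpol]; auto.
    + apply thickness_eq_PI2_iff; auto.
  - intros Q [HsQ _]. rewrite supports_iff in HsQ by auto.
    destruct HsQ as [HQpol _]. pose proof (proj1 (proj1 (polar_iff n W Q) HQpol)) as HQ.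
    apply thickness_PI2_le_iff; auto. apply HPnn, Hself, HQpol.
Qed.

Section ConstantWidthPI2.

Variables (n : nat) (W : vec -> Prop).
Hypothesis W_body : convex_body n W.
Hypothesis W_width : constant_width n W (PI / 2).

Lemma supports_polar P : supports n P W -> polar n W P.
Proof.
  destruct W_body as [Hs [Hc _]]. intros HP. rewrite supports_iff in HP by auto. apply HP.
Qed.

Lemma supports_dot_nonneg P Q : supports n P W -> supports n Q W -> 0 <= dot n P Q.
Proof.
  destruct W_body as [Hs [Hc [_ [[C HC] _]]]]. intros HsP HsQ.
  pose proof (polar_interior_pos n W P C HC (supports_polar P HsP)) as HPC.
  pose proof (polar_interior_pos n W Q C HC (supports_polar Q HsQ)) as HQC.
  destruct (classic (Q = P)) as [->|HQP]; [rewrite (proj2 (proj1 HsP)); lra|].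
  destruct (classic (Q = vopp P)) as [->|HQnP]; [rewrite dot_oppl in HQC; lra|].
  apply thickness_PI2_le_iff; [exact (proj1 HsP)|exact (proj1 HsQ)|].
  apply (proj2 (proj2 W_width P HsP) Q). split; [|split; [|split]]; auto.
  intros X HX. split; [apply (proj1 (proj2 HsP))|apply (proj1 (proj2 HsQ))]; auto.
Qed.

Lemma supports_orthogonal P : supports n P W -> exists Q, supports n Q W /\ dot n P Q = 0.
Proof.
  intros HsP. destruct (proj1 (proj2 W_width P HsP)) as [Q [[HsQ _] Hthick]].
  exists Q. split; auto.
  rewrite <- thickness_eq_PI2_iff; [exact Hthick|exact (proj1 HsP)|exact (proj1 HsQ)].
Qed.

Lemma polar_sub_body Y : polar n W Y -> W Y.
Proof.
  destruct W_body as [Hs [Hc [_ [[C HC] Hconv]]]]. pose proof (interior_mem n W C HC) as HWC.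
  intros HY. apply NNPP; intro HnY.
  destruct (polar_separation n W Y Hs Hc (ex_intro _ C HWC) Hconv (proj1 HY) HnY) as [P [HP HPY]].
  destruct (polar_push_to_support n W P Y C Hs Hc HWC (polar_interior_pos n W P C HC HP) HP HY HPY)
    as [Y1 [HsY1 HPY1]].
  pose proof (supports_polar Y1 HsY1) as HY1.
  destruct (polar_push_to_support n W Y1 P C Hs Hc HWC (polar_interior_pos n W Y1 C HC HY1) HY1 HP)
    as [P1 [HsP1 HY1P1]]; [rewrite dot_sym; exact HPY1|].
  pose proof (supports_dot_nonneg Y1 P1 HsY1 HsP1). lra.
Qed.

Lemma body_sub_polar Q : W Q -> polar n W Q.
Proof.
  destruct W_body as [Hs [Hc [Hhemi _]]]. intros HQ.
  destruct (hemispherical_pos n W Hs Hhemi) as [C0 [HC0 HC0pos]].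
  apply NNPP; intro HnQ.
  assert (Hneg : exists X, W X /\ dot n Q X < 0).
  { apply NNPP; intro Hno. apply HnQ. rewrite polar_iff. split; [apply Hs; auto|].
    intros X HX. apply Rnot_lt_le; intro Hlt. apply Hno; eauto. }
  destruct (supports_on_segment n W C0 Q Hs Hc HC0 (Hs Q HQ)) as [t [c [P [Ht [Hc0 [HsP Hdot]]]]]];
    auto; [left; auto|intros X HX; left; auto|].
  destruct (supports_orthogonal P HsP) as [Q1 [HsQ1 HPQ1]].
  pose proof (supports_polar Q1 HsQ1) as HQ1.
  pose proof (HC0pos Q1 (polar_sub_body Q1 HQ1)).
  pose proof (proj2 (proj1 (polar_iff n W Q1) HQ1) Q HQ). rewrite dot_sym in H0.
  rewrite Hdot in HPQ1.
  assert (0 < (1 - t) * dot n C0 Q1 + t * dot n Q Q1) by nra. nra.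
Qed.

End ConstantWidthPI2.

Theorem proposition3p2 (n : nat) (W : vec -> Prop) :
  convex_body n W ->
  ((forall Q, W Q <-> polar n W Q) <-> constant_width n W (PI / 2)).
Proof.
  intros HW. split.
  - apply constant_width_PI2_of_self_polar; auto.
  - intros Hcw Q. split; [apply body_sub_polar|apply polar_sub_body]; auto.
Qed.
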